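(* Let $\mathcal{P}$ be a property of unordered partial systems that is monotone increasing (if $S\in\mathcal{P}$ and $S'\supseteq S$ then $S'\in\mathcal{P}$). Fix $\alpha\in(0,1)$ and $S\in\mathcal{O}_m$ for some $m\le N-\alpha N$. Let $\mathbf{S}$ have distribution $\mathbb{R}(S,\alpha N)$ and $\mathbf{S}^*$ have distribution $\mathbb{G}^*(S,\alpha/n)$. Then \[ \Pr\left(S\cup\mathbf{S}\notin\mathcal{P}\right)=O(1)\Pr\left(S\cup\mathbf{S}^*\notin\mathcal{P}\right), \] where $S\cup S'$ denotes the unordered partial system consisting of the hyperedges of $S$ and of $S'$.
   Context: Throughout, $n\equiv1$ or $3\pmod 6$, $N=\binom n2/3$, $\alpha N$ is treated as an integer and asymptotics are as $n\to\infty$. A partial system is a 3-uniform hypergraph on $[n]$ in which every pair of vertices lies in at most one hyperedge; $\mathcal{O}_m$ is the set of ordered partial systems with $m$ hyperedges. $G(S)$ is the graph on $[n]$ of pairs not contained in a hyperedge of $S$. For a partial system $S$, $\mathbb{G}(S,p)$ is the random 3-uniform hypergraph in which each triple not conflicting with $S$ (i.e. not intersecting a hyperedge of $S$ in at least 2 vertices, equivalently each triangle of $G(S)$) is included independently with probability $p$; $\mathbb{G}^*(S,p)$ is the partial system obtained from $\mathbb{G}(S,p)$ by deleting every hyperedge that intersects another hyperedge of it in at least 2 vertices. $\mathbb{R}(S,m)$ is the distribution of the partial system formed by the triangles removed in the first $m$ steps of the triangle removal process started from $G(S)$ (repeatedly deleting the edges of a uniformly random triangle of the current graph); if the process runs out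 of triangles before $m$ steps its output is the symbol $*$. Conventions: $*$ is a superset of every partial system, $*\in\mathcal{P}$, and $S\cup *=*$. *)

From HB Require Import structures.
From mathcomp Require Import all_boot all_order all_algebra.
From mathcomp Require Import reals.
Set Implicit Arguments. Unset Strict Implicit. Unset Printing Implicit Defensive.
Import Order.TTheory GRing.Theory Num.Theory.
Local Open Scope ring_scope.

Section Defs.
Variable n : nat.
Definition hgraph := {set {set 'I_n}}.

Definition Nsys : nat := ('C(n, 2) %/ 3)%N.

Definition partial_sys (H : hgraph) : bool :=
  [forall e in H, #|e| == 3%N] &&
  [forall e in H, forall f in H, (e != f) ==> (#|e :&: f| <= 1)%N].

Definition ordered_psys (m : nat) (s : seq {set 'I_n}) : bool :=
  [&& size s == m, uniq s & partial_sys [set e in s]].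

Definition graph_of (H : hgraph) : hgraph :=
  [set p : {set 'I_n} | (#|p| == 2%N) && [forall e in H, ~~ (p \subset e)]].

Definition triangles (G : hgraph) : hgraph :=
  [set t : {set 'I_n} | (#|t| == 3%N) &&
     [forall p : {set 'I_n}, ((#|p| == 2%N) && (p \subset t)) ==> (p \in G)]].

Definition remove_tri (G : hgraph) (t : {set 'I_n}) : hgraph :=
  G :\: [set p : {set 'I_n} | (#|p| == 2%N) && (p \subset t)].

(* The outcome is [Some X] (X = set of removed
   triangles) or [None] (the symbol * : ran out of triangles). *)
Fixpoint rem_prob (R : realType) (E : option hgraph -> bool) (k : nat)
    (G acc : hgraph) : R :=
  match k with
  | 0 => (E (Some acc))%:R
  | k'.+1 =>
      if triangles G == set0 then (E None)%:R
      else (#|triangles G|%:R)^-1 *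
           \sum_(t in triangles G) rem_prob R E k' (remove_tri G t) (t |: acc)
  end.

(* event "S u S' notin P", with the convention * in P and S u * = * *)
Definition bad_event (P : hgraph -> bool) (H : hgraph) (o : option hgraph) : bool :=
  if o is Some X then ~~ P (H :|: X) else false.

Definition prob_removal (R : realType) (P : hgraph -> bool)
    (s : seq {set 'I_n}) (k : nat) : R :=
  rem_prob R (bad_event P [set e in s]) k (graph_of [set e in s]) set0.

Definition free_triples (H : hgraph) : hgraph :=
  [set t : {set 'I_n} | (#|t| == 3%N) && [forall e in H, (#|t :&: e| <= 1)%N]].

(* G*(.) from G(.): delete hyperedges meeting another in >= 2 vertices *)
Definition clean (X : hgraph) : hgraph :=
  [set e in X | [forall f in X, (f != e) ==> (#|e :&: f| <= 1)%N]].

Definition prob_binomial (R : realType) (p : R) (P : hgraph -> bool)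
    (s : seq {set 'I_n}) : R :=
  let H := [set e in s] in
  \sum_(X : hgraph | X \subset free_triples H)
     p ^+ #|X| * (1 - p) ^+ (#|free_triples H| - #|X|) *
     (~~ P (H :|: clean X))%:R.

Definition monotone_prop (P : hgraph -> bool) : Prop :=
  forall A B : hgraph, partial_sys A -> partial_sys B ->
    A \subset B -> P A -> P B.
End Defs.

Definition steps (R : realType) (alpha : R) (n : nat) : nat :=
  Num.truncn (alpha * (Nsys n)%:R).

From HB Require Import structures.
From mathcomp Require Import all_boot all_order all_algebra.
From mathcomp Require Import reals.
From mathcomp Require Import ring lra zify.
Import Order.TTheory GRing.Theory Num.Theory.
Local Open Scope ring_scope.
Set Implicit Arguments. Unset Strict Implicit. Unset Printing Implicit Defensive.

(* The removal process is coupled with uniform random [j]-sets of free triples: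
   for [j <= k], the probability that [k] removal steps end badly is at most
   the probability that [S] plus the clean part of a uniform [j]-subset of the
   free triples is bad.  This goes by induction on [j]: a uniform element of a
   set containing all current triangles is either a uniform removal step or
   leaves the state unchanged, and badness passes to subsets since [P] is
   increasing.  Splitting the binomial sample by its size then gives
   Pr(binomial bad) >= Pr(Bin(T, p) <= k) * Pr(removal bad), and Cantelli's
   inequality bounds Pr(Bin(T, p) <= alpha N) below by alpha / 7: the gap
   [k + 1 - T p] is at least [alpha n / 6] while the variance is at most
   [alpha n^2 / 6]. *)

Section FinsetSums.
Variable T : finType.
Implicit Types (A V : {set T}).

Lemma card_le1P A :
  reflect (forall p : {set T}, #|p| = 2%N -> ~~ (p \subset A)) (#|A| <= 1)%N.
Proof.
apply: (iffP idP) => [A1 p p2|noPair].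
  by apply/negP => /subset_leq_card; rewrite p2 => /leq_trans/(_ A1).
rewrite leqNgt; apply/negP => /card_gt1P[x [y [xA yA xy]]].
have xy2 : #|[set x; y]| = 2%N by rewrite cards2 xy.
have /negP[] := noPair _ xy2.
by apply/subsetP => z; rewrite !inE => /orP[]/eqP->.
Qed.

Lemma disjoint_setU1D1 (t : T) (W V : {set T}) :
  [disjoint W & V] -> [disjoint t |: W & V :\ t].
Proof.
move=> WV; rewrite -setI_eq0 setIUl -subset0 subUset !subset0 !setI_eq0 disjoints1.
by rewrite setD11 (disjointWr (subsetDl _ _) WV).
Qed.

Definition ksub_sum (M : nmodType) V (L : nat) (f : {set T} -> M) : M :=
  \sum_(Z : {set T} | (Z \subset V) && (#|Z| == L)) f Z.

Variable M : nmodType.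
Implicit Types (f : {set T} -> M).

Lemma ksub_sum0 V f : ksub_sum V 0 f = f set0.
Proof.
rewrite /ksub_sum (big_pred1 set0) // => Z /=.
by rewrite cards_eq0 andbC; case: eqP => // ->; rewrite sub0set.
Qed.

Lemma ksub_sumS V L f :
  ksub_sum V L.+1 f *+ L.+1 = \sum_(t in V) ksub_sum (V :\ t) L (fun Z => f (t |: Z)).
Proof.
rewrite /ksub_sum -sumrMnl.
rewrite (eq_bigr (fun Y : {set T} => \sum_(t in Y) f Y)); last first.
  by move=> Y /andP[_ /eqP cY]; rewrite sumr_const cY.
rewrite (exchange_big_dep (mem V)) /=; last by move=> Y t /andP[/subsetP sYV _] tY; apply: sYV.
apply: eq_bigr => t tV.
rewrite [RHS](reindex_onto (fun Y => Y :\ t) (fun Z => t |: Z)); last first.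
  move=> Z /andP[/subsetP sZ _]; apply: setU1K; apply/negP => /sZ.
  by rewrite in_setD1 eqxx.
apply: eq_big => [Y|Y /andP[_ tY]]; last by rewrite setD1K.
case tY: (t \in Y); last first.
  by rewrite andbF; apply/esym/negP => /andP[_ /eqP tZY]; rewrite -tZY setU11 in tY.
rewrite setD1K // eqxx !andbT (cardsD1 t Y) tY eqSS; congr (_ && _).
apply/idP/idP => [|/subsetP sYt]; first exact: setSD.
apply/subsetP => y yY; have [-> //|yt] := eqVneq y t.
have /sYt : y \in Y :\ t by rewrite in_setD1 yt.
by rewrite in_setD1 => /andP[].
Qed.

Lemma sum_subsets_by_card V f :
  \sum_(X : {set T} | X \subset V) f X = \sum_(j < #|V|.+1) ksub_sum V j f.
Proof.
rewrite (partition_big (fun X : {set T} => inord #|X| : 'I_#|V|.+1) predT) //=.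
apply: eq_bigr => j _; apply: eq_bigl => X.
case sXV: (X \subset V) => //=.
by rewrite -val_eqE /= inordK // ltnS subset_leq_card.
Qed.

End FinsetSums.

Section PartialSystems.
Variable n : nat.
Implicit Types (A B G H X Y : hgraph n) (t u e : {set 'I_n}).

Lemma partial_sysS A B : A \subset B -> partial_sys B -> partial_sys A.
Proof.
move=> /subsetP sAB /andP[/forall_inP card3 /forall_inP meet1]; apply/andP; split.
  by apply/forall_inP => e /sAB; apply: card3.
apply/forall_inP => e /sAB eB; apply/forall_inP => f /sAB fB.
exact: (forall_inP (meet1 e eB)).
Qed.

Lemma partial_sysU1 A t : #|t| = 3%N -> (forall e, e \in A -> (#|t :&: e| <= 1)%N) ->
  partial_sys A -> partial_sys (t |: A).
Proof.
move=> t3 tA /andP[/forall_inP card3 /forall_inP meet1]; apply/andP; split.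
  by apply/forall_inP => e /setU1P[->|/card3]; rewrite ?t3.
apply/forall_inP => e /setU1P[->|eA]; apply/forall_inP => f /setU1P[->|fA].
- by rewrite eqxx.
- by apply/implyP => _; apply: tA.
- by apply/implyP => _; rewrite setIC; apply: tA.
- exact: (forall_inP (meet1 e eA)).
Qed.

Lemma mem_triangles_remove_tri G t u :
  (u \in triangles (remove_tri G t)) = (u \in triangles G) && (#|u :&: t| <= 1)%N.
Proof.
rewrite !inE; case: (#|u| == 3%N) => //=; apply/forallP/andP => [uG|[/forallP uG /card_le1P ut1]].
  split; first by apply/forallP => p; apply/implyP => /(implyP (uG p)); rewrite inE => /andP[].
  apply/card_le1P => p p2; rewrite subsetI; apply/negP => /andP[pu pt].
  by have := implyP (uG p); rewrite p2 eqxx pu !inE p2 eqxx pt => /(_ isT).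
move=> p; apply/implyP => /andP[/eqP p2 pu]; rewrite !inE p2 eqxx /=.
have := ut1 p p2; rewrite subsetI pu /= => -> /=.
by apply: (implyP (uG p)); rewrite p2 eqxx pu.
Qed.

Lemma free_triplesE H : free_triples H = triangles (graph_of H).
Proof.
apply/setP => t; rewrite !inE; case: (#|t| == 3%N) => //=.
apply/forall_inP/forallP => [tH p|tG e eH].
  apply/implyP => /andP[/eqP p2 pt]; rewrite inE p2 eqxx /=.
  apply/forall_inP => e /tH /card_le1P /(_ p p2); by rewrite subsetI pt.
apply/card_le1P => p p2; rewrite subsetI; apply/negP => /andP[pt pe].
have := implyP (tG p); rewrite p2 eqxx pt inE p2 eqxx /= => /(_ isT).
by move=> /forall_inP /(_ e eH); rewrite pe.
Qed.

End PartialSystems.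

Section Binomial.
Variables (R : realFieldType) (p : R).

Definition binom_pmf (T j : nat) : R := 'C(T, j)%:R * p ^+ j * (1 - p) ^+ (T - j).

Definition binom_mean (T : nat) (f : nat -> R) : R := \sum_(j < T.+1) binom_pmf T j * f j.

Definition binom_cdf (T k : nat) : R := \sum_(j < T.+1 | (j <= k)%N) binom_pmf T j.

Lemma binom_mean0 f : binom_mean 0 f = f 0%N.
Proof. by rewrite /binom_mean /binom_pmf big_ord1 /= bin0 !expr0 !mul1r. Qed.

Lemma binom_meanS T f :
  binom_mean T.+1 f = (1 - p) * binom_mean T f + p * binom_mean T (fun j => f j.+1).
Proof.
rewrite /binom_mean /binom_pmf big_ord_recl /= bin0 expr0 mul1r subn0.
rewrite (eq_bigr (fun i : 'I_T.+1 => 'C(T, i.+1)%:R * p ^+ i.+1 * (1 - p) ^+ (T - i) * f i.+1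
   + p * ('C(T, i)%:R * p ^+ i * (1 - p) ^+ (T - i) * f i.+1))); last first.
  by move=> i _; rewrite /bump /= add1n binS natrD subSS exprS; ring.
rewrite big_split /= -mulr_sumr mul1r addrA; congr (_ + _).
rewrite [in RHS]big_ord_recl /= bin0 expr0 !mul1r subn0 mulrDr exprS mulrA; congr (_ + _).
rewrite big_ord_recr /= bin_small // !mul0r addr0 mulr_sumr.
apply: eq_bigr => i _; rewrite /bump /= add1n -(subnSK (ltn_ord i)) [(1 - p) ^+ _.+1]exprS; ring.
Qed.

Lemma binom_mean_const T c : binom_mean T (fun=> c) = c.
Proof.
elim: T => [|T IH]; first exact: binom_mean0.
by rewrite binom_meanS IH; ring.
Qed.

Lemma binom_mean_sqr T c :
  binom_mean T (fun j => (j%:R + c) ^+ 2) = T%:R * p * (1 - p) + (T%:R * p + c) ^+ 2.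
Proof.
elim: T c => [|T IH] c.
  by rewrite binom_mean0; ring.
have shift : binom_mean T (fun j => (j.+1%:R + c) ^+ 2) =
             binom_mean T (fun j => (j%:R + (c + 1)) ^+ 2).
  by apply: eq_bigr => j _; rewrite -natr1 -addrA (addrC 1).
by rewrite binom_meanS shift !IH -natr1; ring.
Qed.

Hypotheses (p_ge0 : 0 <= p) (p_le1 : p <= 1).

Lemma binom_pmf_ge0 T j : 0 <= binom_pmf T j.
Proof. by rewrite /binom_pmf !mulr_ge0 ?exprn_ge0 ?ler0n ?subr_ge0. Qed.

Lemma binom_cdf_cantelli T k :
  let s := k.+1%:R - T%:R * p in let v := T%:R * p * (1 - p) in
  0 < s -> s ^+ 2 / (s ^+ 2 + v) <= binom_cdf T k.
Proof.
move=> s v s_gt0.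
have v_ge0 : 0 <= v by rewrite /v !mulr_ge0 ?ler0n ?subr_ge0.
have s2v_gt0 : 0 < s ^+ 2 + v by rewrite ltr_pwDl ?exprn_gt0.
pose u := v / s.
have u_ge0 : 0 <= u by rewrite divr_ge0 // ltW.
have su_gt0 : 0 < s + u by rewrite ltr_pwDl.
have tail : \sum_(j < T.+1 | ~~ (j <= k)%N) binom_pmf T j <= v / (s ^+ 2 + v).
  (* Markov for [(X - T p + u)^2], with the optimal shift [u = v / s]. *)
  have -> : v / (s ^+ 2 + v) =
      binom_mean T (fun j => (j%:R + (u - T%:R * p)) ^+ 2) / (s + u) ^+ 2.
    rewrite binom_mean_sqr addrCA subrr addr0 -/v /u.
    by field; rewrite ?gt_eqF // addr_gt0 ?exprn_gt0 //.
  rewrite /binom_mean mulr_suml [X in _ <= X](bigID (fun j : 'I_T.+1 => (j <= k)%N)) /=.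
  rewrite -[X in X <= _]add0r; apply: lerD.
    apply: sumr_ge0 => j _; apply: divr_ge0; first by rewrite mulr_ge0 ?binom_pmf_ge0 ?sqr_ge0.
    by rewrite exprn_ge0 // ltW.
  apply: ler_sum => j; rewrite -ltnNge => kj.
  rewrite -mulrA ler_peMr ?binom_pmf_ge0 // ler_pdivlMr ?exprn_gt0 // mul1r.
  have kj' : k.+1%:R <= j%:R :> R by rewrite ler_nat.
  have hj : s + u <= j%:R + (u - T%:R * p) by rewrite /s; lra.
  by rewrite ler_sqr ?nnegrE ?(ltW su_gt0) ?(le_trans (ltW su_gt0) hj).
have total : binom_cdf T k + \sum_(j < T.+1 | ~~ (j <= k)%N) binom_pmf T j = 1.
  rewrite -(binom_mean_const T 1) /binom_mean /binom_cdf [RHS](bigID (fun j : 'I_T.+1 => (j <= k)%N)).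
  by congr (_ + _); apply: eq_bigr => j _; rewrite mulr1.
have -> : s ^+ 2 / (s ^+ 2 + v) = 1 - v / (s ^+ 2 + v) by field; rewrite gt_eqF.
lra.
Qed.

End Binomial.

Lemma binom_cdf_lower (R : realFieldType) (a x : R) (T k : nat) :
  0 < a -> a <= 1 -> 6 <= x -> 6 * T%:R <= x * (x - 1) * (x - 2) ->
  a * (x * (x - 1) - 4) < 6 * k.+1%:R -> a / 7 <= binom_cdf (a / x) T k.
Proof.
move=> a_gt0 a_le1 x_ge6 T_le k_gt.
have x_gt0 : 0 < x by lra.
set p := a / x.
have p_ge0 : 0 <= p by rewrite divr_ge0 // ltW.
have p_le1 : p <= 1 by rewrite ler_pdivrMr // mul1r; lra.
have Tp : 6 * (T%:R * p) <= a * ((x - 1) * (x - 2)).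
  rewrite /p mulrA mulrCA mulrA ler_pdivrMr //.
  have := ler_wpM2l (ltW a_gt0) T_le; nra.
pose s := k.+1%:R - T%:R * p.
have s_ge : a * x <= 6 * s by rewrite /s; nra.
have s_gt0 : 0 < s by nra.
pose v := T%:R * p * (1 - p).
have Tp_ge0 : 0 <= T%:R * p by rewrite mulr_ge0 ?ler0n.
have v_ge0 : 0 <= v by rewrite /v mulr_ge0 // subr_ge0.
have v_le : 6 * v <= a * x ^+ 2.
  have : v <= T%:R * p by rewrite /v ler_piMr //; lra.
  nra.
apply: le_trans (binom_cdf_cantelli p_ge0 p_le1 s_gt0).
rewrite -/s -/v ler_pdivlMr ?ltr_pwDl ?exprn_gt0 //.
have : a * (6 * v) <= a * (a * x ^+ 2) by rewrite ler_wpM2l // ltW.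
have : (a * x) ^+ 2 <= (6 * s) ^+ 2 by rewrite ler_sqr ?nnegrE ?mulr_ge0 // ltW.
have : a * s ^+ 2 <= s ^+ 2 by rewrite ler_piMl ?sqr_ge0.
lra.
Qed.

Section RemovalProcess.
Variables (R : realType) (n : nat) (P : hgraph n -> bool) (H : hgraph n).
Hypotheses (P_mono : monotone_prop P) (H_psys : partial_sys H).
Implicit Types (G X Y W V acc : hgraph n) (t u : {set 'I_n}).

Definition removal_inv G acc : bool :=
  partial_sys (H :|: acc) &&
  [forall t in triangles G, forall e in H :|: acc, (#|t :&: e| <= 1)%N].

Lemma removal_inv_init : removal_inv (graph_of H) set0.
Proof.
rewrite /removal_inv setU0 H_psys -free_triplesE /=.
by apply/forall_inP => t; rewrite inE => /andP[_].
Qed.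

Lemma removal_inv_step G acc t : removal_inv G acc -> t \in triangles G ->
  removal_inv (remove_tri G t) (t |: acc).
Proof.
move=> /andP[psys /forall_inP meet1] tG; apply/andP; split.
  rewrite setUCA; apply: partial_sysU1 => //; first by move: tG; rewrite inE => /andP[/eqP].
  by have /forall_inP := meet1 t tG.
apply/forall_inP => u; rewrite mem_triangles_remove_tri => /andP[uG ut].
apply/forall_inP => e; rewrite setUCA => /setU1P[->//|].
by have /forall_inP := meet1 u uG; apply.
Qed.

(* The [partial_sys] conjunct makes [bad] closed under subsets, as [P] is
   only monotone on partial systems. *)
Definition bad X : bool := partial_sys (H :|: X) && ~~ P (H :|: X).

Lemma badS X Y : X \subset Y -> bad Y -> bad X.
Proof.
move=> sXY /andP[psY notPY]; have sH : H :|: X \subset H :|: Y by apply: setUS.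
have psX := partial_sysS sH psY.
by rewrite /bad psX; apply: contra notPY; apply: P_mono.
Qed.

Lemma ler_bad X Y : X \subset Y -> (bad Y)%:R <= (bad X)%:R :> R.
Proof. by move=> sXY; case: (boolP (bad Y)) => // /(badS sXY) ->. Qed.

Local Notation rp := (rem_prob R (bad_event P H)).

Lemma rem_prob_ge0 k G acc : 0 <= rp k G acc.
Proof.
elim: k G acc => [|k IH] G acc /=; first exact: ler0n.
case: ifP => _; first exact: ler0n.
by rewrite mulr_ge0 ?invr_ge0 ?ler0n ?sumr_ge0.
Qed.

(* The outcome contains [acc], and [*] counts as good. *)
Lemma rem_prob_le_bad k G acc : removal_inv G acc -> rp k G acc <= (bad acc)%:R.
Proof.
elim: k G acc => [|k IH] G acc inv /=.
  by move: inv => /andP[psys _]; rewrite /bad psys.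
case: ifPn => [_|/set0Pn[t0 t0G]]; first exact: ler0n.
have tri_gt0 : (0 < #|triangles G|)%N by apply/card_gt0P; exists t0.
apply: (@le_trans _ _ (#|triangles G|%:R^-1 * \sum_(t in triangles G) (bad acc)%:R)).
  rewrite ler_wpM2l ?invr_ge0 ?ler0n //; apply: ler_sum => t tG.
  exact: le_trans (IH _ _ (removal_inv_step inv tG)) (ler_bad (subsetUr _ _)).
by rewrite sumr_const mulrnAr -mulr_natr mulrAC mulVf ?mul1r // pnatr_eq0 -lt0n.
Qed.

Definition clean_extension G acc Y := acc :|: (clean Y :&: triangles G).

Lemma clean_subset Y : clean Y \subset Y.
Proof. by apply/subsetP => u; rewrite inE => /andP[]. Qed.

Lemma clean_meet1 Y u f : u \in clean Y -> f \in Y -> f != u -> (#|u :&: f| <= 1)%N.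
Proof. by rewrite inE => /andP[_ /forall_inP uY] /uY /implyP. Qed.

Lemma clean_extension_step G acc Y t : t \in Y ->
  clean_extension G acc Y \subset clean_extension (remove_tri G t) (t |: acc) Y.
Proof.
move=> tY; apply/subsetP => u /setUP[uacc|/setIP[uY uG]].
  by rewrite in_setU in_setU1 uacc orbT.
rewrite in_setU in_setU1 in_setI uY mem_triangles_remove_tri uG /=.
have [//|ut] := eqVneq u t.
by rewrite (clean_meet1 uY tY) ?orbT // eq_sym.
Qed.

Lemma clean_extension_id G acc W V : triangles G \subset V -> [disjoint W & V] ->
  clean_extension G acc W = acc.
Proof.
move=> /subsetP GV WV; apply/setUidPl/subsetP => u /setIP[/(subsetP (clean_subset W)) uW].
by move=> /GV; rewrite (disjointFr WV uW).
Qed.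

Lemma rem_prob_average k G acc V : triangles G != set0 -> triangles G \subset V ->
  \sum_(t in V) (if t \in triangles G then rp k (remove_tri G t) (t |: acc)
                 else rp k.+1 G acc) = #|V|%:R * rp k.+1 G acc.
Proof.
move=> G_tri GV.
have sum_tri : \sum_(t in triangles G) rp k (remove_tri G t) (t |: acc) =
               #|triangles G|%:R * rp k.+1 G acc.
  by rewrite /= (negbTE G_tri) mulrA mulfV ?mul1r // pnatr_eq0 cards_eq0.
set r := rp k.+1 G acc in sum_tri *.
rewrite (big_setID (triangles G)) /= (setIidPr GV).
rewrite (eq_bigr (fun t => rp k (remove_tri G t) (t |: acc))); last by move=> t ->.
rewrite [X in _ + X](eq_bigr (fun=> r)); last first.
  by move=> t; rewrite in_setD => /andP[/negbTE ->].
rewrite sum_tri sumr_const -[r *+ _]mulr_natl -mulrDl -natrD.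
by rewrite -(cardsID (triangles G) V) (setIidPr GV).
Qed.

(* [W] holds the triples drawn so far and [V] the remaining candidates, which
   include every current triangle. *)
Lemma rem_prob_le_ksub_sum L k G acc W V :
  (L <= k)%N -> (L <= #|V|)%N -> removal_inv G acc -> triangles G \subset V ->
  [disjoint W & V] ->
  rp k G acc * 'C(#|V|, L)%:R <=
    ksub_sum V L (fun Z => (bad (clean_extension G acc (W :|: Z)))%:R).
Proof.
elim: L k G acc W V => [|L IH] k G acc W V Lk LV inv GV WV.
  by rewrite bin0 mulr1 ksub_sum0 setU0 (clean_extension_id _ GV WV) rem_prob_le_bad.
case: k Lk => // k; rewrite ltnS => Lk.
have [G_tri0|G_tri] := eqVneq (triangles G) set0.
  by rewrite /= G_tri0 eqxx mul0r sumr_ge0.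
have step t : t \in V ->
    (if t \in triangles G then rp k (remove_tri G t) (t |: acc) else rp k.+1 G acc)
      * 'C(#|V|.-1, L)%:R <=
    ksub_sum (V :\ t) L (fun Z => (bad (clean_extension G acc (W :|: (t |: Z))))%:R).
  move=> tV; have cVt : #|V :\ t| = #|V|.-1 by rewrite (cardsD1 t V) tV.
  have LVt : (L <= #|V :\ t|)%N by rewrite cVt -ltnS prednK // (leq_ltn_trans _ LV).
  have tWV := disjoint_setU1D1 t WV.
  have WtZ Z : W :|: (t |: Z) = (t |: W) :|: Z by rewrite setUCA setUA.
  rewrite -cVt; case: ifPn => tG.
    have tri_t : triangles (remove_tri G t) \subset V :\ t.
      apply/subsetP => u; rewrite mem_triangles_remove_tri in_setD1 => /andP[uG ut].
      rewrite (subsetP GV u uG) andbT; apply: contraTneq ut => ->.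
      by move: tG; rewrite setIid inE => /andP[/eqP->].
    apply: le_trans (IH k _ _ _ _ Lk LVt (removal_inv_step inv tG) tri_t tWV) _.
    apply: ler_sum => Z _; apply: ler_bad; rewrite WtZ; apply: clean_extension_step.
    by rewrite !inE eqxx.
  have tri_t : triangles G \subset V :\ t.
    apply/subsetP => u uG; rewrite in_setD1 (subsetP GV u uG) andbT.
    by apply: contraNneq tG => <-.
  apply: le_trans (IH k.+1 _ _ _ _ (leqW Lk) LVt inv tri_t tWV) _.
  by apply: ler_sum => Z _; rewrite WtZ.
rewrite -(ler_pMn2r (ltn0Sn L)) ksub_sumS.
have binV : 'C(#|V|, L.+1)%:R *+ L.+1 = #|V|%:R * 'C(#|V|.-1, L)%:R :> R.
  by rewrite -mulr_natr -!natrM mulnC -mul_bin_diag.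
rewrite -mulrnAr binV mulrA (mulrC _ #|V|%:R) -(rem_prob_average k acc G_tri GV).
by rewrite mulr_suml; apply: ler_sum => t tV; apply: step.
Qed.

Lemma rem_prob_le_ksub_clean k j : (j <= k)%N -> (j <= #|free_triples H|)%N ->
  rp k (graph_of H) set0 * 'C(#|free_triples H|, j)%:R <=
    ksub_sum (free_triples H) j (fun Z => (~~ P (H :|: clean Z))%:R).
Proof.
move=> jk jT; have GV : triangles (graph_of H) \subset free_triples H by rewrite free_triplesE.
have W0 : [disjoint set0 & free_triples H] by rewrite -setI_eq0 set0I.
apply: le_trans (rem_prob_le_ksub_sum jk jT removal_inv_init GV W0) _.
apply: ler_sum => Z /andP[ZV _]; rewrite /clean_extension !set0U (setIidPl _).
  by rewrite /bad; case: partial_sys.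
by rewrite -free_triplesE (subset_trans (clean_subset Z)).
Qed.

Lemma rem_prob_mul_cdf_le (p : R) k : 0 <= p -> p <= 1 ->
  rp k (graph_of H) set0 * binom_cdf p #|free_triples H| k <=
  \sum_(X : hgraph n | X \subset free_triples H)
     p ^+ #|X| * (1 - p) ^+ (#|free_triples H| - #|X|) * (~~ P (H :|: clean X))%:R.
Proof.
move=> p_ge0 p_le1; set V := free_triples H; set T := #|V|.
have bound j : (j <= k)%N -> (j <= T)%N ->
    rp k (graph_of H) set0 * binom_pmf p T j <=
    ksub_sum V j (fun X => p ^+ #|X| * (1 - p) ^+ (T - #|X|) * (~~ P (H :|: clean X))%:R).
  move=> jk jT.
  have -> : ksub_sum V j (fun X => p ^+ #|X| * (1 - p) ^+ (T - #|X|) * (~~ P (H :|: clean X))%:R)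
      = p ^+ j * (1 - p) ^+ (T - j) * ksub_sum V j (fun X => (~~ P (H :|: clean X))%:R).
    by rewrite /ksub_sum mulr_sumr; apply: eq_bigr => X /andP[_ /eqP ->].
  have pq_ge0 : 0 <= p ^+ j * (1 - p) ^+ (T - j) by rewrite mulr_ge0 ?exprn_ge0 ?subr_ge0.
  apply: le_trans (ler_wpM2l pq_ge0 (rem_prob_le_ksub_clean jk jT)).
  rewrite -/V -/T /binom_pmf.
  (* Without generalizing, [ring] tries to compute [T - j]. *)
  move: (rp _ _ _) ('C(T, j)%:R) (p ^+ j) ((1 - p) ^+ (T - j)) => r c a b.
  by rewrite le_eqVlt; apply/orP; left; apply/eqP; ring.
rewrite sum_subsets_by_card /binom_cdf mulr_sumr.
rewrite [X in _ <= X](bigID (fun j : 'I_T.+1 => (j <= k)%N)) -[X in X <= _]addr0.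
apply: lerD; first by apply: ler_sum => j jk; apply: bound; rewrite // -ltnS.
by apply: sumr_ge0 => j _; apply: sumr_ge0 => X _; rewrite !mulr_ge0 ?exprn_ge0 ?ler0n ?subr_ge0.
Qed.

End RemovalProcess.

Lemma card_free_triples_le n (H : hgraph n) : (#|free_triples H| * 6 <= n * n.-1 * n.-2)%N.
Proof.
have T_le : (#|free_triples H| <= 'C(n, 3))%N.
  rewrite -[n in 'C(n, 3)]card_ord -card_draws; apply: subset_leq_card.
  by apply/subsetP => t; rewrite !inE => /andP[-> _].
have := bin_ffact n 3; rewrite !ffactnS ffactn0 muln1 mulnA => <-.
by rewrite leq_mul2r T_le orbT.
Qed.

Lemma muln_pred_le_Nsys n : (n * n.-1 <= 6 * Nsys n + 4)%N.
Proof.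
have := bin_ffact n 2; rewrite !ffactnS ffactn0 muln1 (_ : 2`! = 2) // /Nsys => <-.
have := divn_eq 'C(n, 2) 3; have := ltn_pmod 'C(n, 2) (isT : (0 < 3)%N).
lia.
Qed.

Theorem lemma2p10 (R : realType) (alpha : R) :
  0 < alpha < 1 ->
  exists C : R, exists n0 : nat,
  forall n : nat, (n0 <= n)%N -> (n %% 6 == 1)%N || (n %% 6 == 3)%N ->
  forall P : hgraph n -> bool, monotone_prop P ->
  forall (m : nat) (s : seq {set 'I_n}),
    ordered_psys m s -> (m <= Nsys n - steps alpha n)%N ->
    prob_removal R P s (steps alpha n) <=
      C * prob_binomial (alpha / n%:R) P s.
Proof.
move=> /andP[a_gt0 a_lt1]; exists (7 / alpha), 6%N => n n_ge6 _ P P_mono m s s_psys _.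
have H_psys : partial_sys [set e in s] by case/and3P: s_psys.
have n_ge6' : 6 <= n%:R :> R by rewrite (ler_nat R 6).
have [n1 n2] : n.-1%:R = n%:R - 1 :> R /\ n.-2%:R = n%:R - 2 :> R.
  by rewrite -!subn1 -subnDA !natrB //; lia.
have T_le : 6 * #|free_triples [set e in s]|%:R <= n%:R * (n%:R - 1) * (n%:R - 2) :> R.
  by rewrite -n1 -n2 -!natrM (ler_nat R) mulnC card_free_triples_le.
have k_gt : alpha * (n%:R * (n%:R - 1) - 4) < 6 * (steps alpha n).+1%:R.
  have := muln_pred_le_Nsys n; rewrite -(ler_nat R) natrD !natrM n1.
  have := truncnS_gt (alpha * (Nsys n)%:R); nra.
have p_ge0 : 0 <= alpha / n%:R by rewrite divr_ge0 // ltW.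
have p_le1 : alpha / n%:R <= 1 by rewrite ler_pdivrMr; lra.
have cdf := binom_cdf_lower a_gt0 (ltW a_lt1) n_ge6' T_le k_gt.
have key := rem_prob_mul_cdf_le P_mono H_psys (steps alpha n) p_ge0 p_le1.
rewrite -invf_div ler_pdivlMl ?divr_gt0 // mulrC.
by apply: le_trans key; rewrite ler_wpM2l ?rem_prob_ge0.
Qed.
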